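(* Let $N=(a_1,\dots,a_s)\in\mathbb{N}_0^s$ be an $s$-tuple of non-negative integers, and for an integer $b\ge 0$ let $N+b=(a_1,\dots,a_s,b)$. For every tuple $M$ write $n_j(M)=\#\{a\in M\mid a\le j\}$ (counted with multiplicity) and $p(M)=\max\{j\mid \sum_{a\in M,\,a\le j}(j+1-a)\le j\}$, assumed to exist. Then: (a) $p(N+b)\le p(N)$ for every integer $b\ge 0$; (b) if $p=p(N)\ge 2$, $n_{p-1}(N)=0$ and $n_p(N)\le 1$, then $p(N+b)=p$ for every integer $b\ge 2$.
   Context: Sums over empty index sets are zero; entries of tuples are counted with multiplicity. *)

From mathcomp Require Import all_boot.
Set Implicit Arguments. Unset Strict Implicit. Unset Printing Implicit Defensive.

(* Tuples of non-negative integers are sequences of nat (entries counted with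
   multiplicity).  N + b is the tuple N with b appended. *)
Definition tadd (N : seq nat) (b : nat) : seq nat := rcons N b.

Definition nle (M : seq nat) (j : nat) : nat := count (fun a => a <= j) M.

Definition defect (M : seq nat) (j : nat) : nat :=
  \sum_(a <- M | a <= j) (j.+1 - a).

Definition pcond (M : seq nat) (j : nat) : Prop := defect M j <= j.

(* is_p M p  <->  p(M) exists and equals p *)
Definition is_p (M : seq nat) (p : nat) : Prop :=
  pcond M p /\ forall j, pcond M j -> j <= p.

From mathcomp Require Import all_boot.
From mathcomp Require Import zify.

(* Appending an entry can only increase the defect, so the set of admissible
   [j] shrinks and its maximum cannot grow.  Under the gap hypothesis every
   entry [a <= p] of [N] equals [p] and contributes [1], so the defect at [p]
   is [n_p(N) <= 1]; an appended [b >= 2] adds at most [p - 1]. *)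

Lemma defect_tadd N b j :
  defect (tadd N b) j = defect N j + (if b <= j then j.+1 - b else 0).
Proof.
rewrite /defect /tadd -cats1 big_cat /= big_cons big_nil.
by case: (b <= j); rewrite ?addn0.
Qed.

Lemma defect_le_tadd N b j : defect N j <= defect (tadd N b) j.
Proof. by rewrite defect_tadd leq_addr. Qed.

Lemma pcond_tadd N b j : pcond (tadd N b) j -> pcond N j.
Proof. exact: leq_trans (defect_le_tadd N b j). Qed.

Lemma defect_gap N j : nle N j.-1 = 0 -> defect N j = nle N j.
Proof.
rewrite /nle => n0.
have /hasPn gapN : ~~ has (fun a => a <= j.-1) N by rewrite has_count n0.
rewrite /defect -sum1_count big_seq_cond [RHS]big_seq_cond.
apply: eq_bigr => a /andP[/gapN /negbTE lt_a aj].
by move: lt_a aj; lia.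
Qed.

Lemma is_p_tadd_le N b p pb : is_p N p -> is_p (tadd N b) pb -> pb <= p.
Proof. by move=> [_ maxp] [pb_ok _]; apply/maxp/pcond_tadd/pb_ok. Qed.

Lemma is_p_tadd N b p : is_p N p -> pcond (tadd N b) p -> is_p (tadd N b) p.
Proof. by move=> [_ maxp] p_ok; split=> // j /pcond_tadd/maxp. Qed.

Lemma pcond_tadd_gap N b p :
  0 < p -> nle N p.-1 = 0 -> nle N p <= 1 -> 2 <= b -> pcond (tadd N b) p.
Proof.
move=> p_gt0 gapN n_p_le1 b_ge2.
rewrite /pcond defect_tadd defect_gap //.
by case: ifP; lia.
Qed.

Theorem lemma4p7 (N : seq nat) :
  (forall (b p pb : nat), is_p N p -> is_p (tadd N b) pb -> pb <= p) /\
  (forall p : nat, is_p N p -> 2 <= p -> nle N p.-1 = 0 -> nle N p <= 1 ->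
     forall b : nat, 2 <= b -> is_p (tadd N b) p).
Proof.
split; first exact: is_p_tadd_le.
move=> p pN p_ge2 gapN n_p_le1 b b_ge2.
apply: is_p_tadd => //; apply: pcond_tadd_gap => //; exact: ltnW.
Qed.
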